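(* Let $\Delta t>0$ be fixed and consider a diagonally implicit, globally stiffly accurate (GSA) $s$-stage IMEX-RK scheme that is either of type A or of type CK, applied to the isentropic Euler system on $\mathbb{T}^d$ in the time semi-discrete form below. Suppose the data at time $t^n$ are well prepared, i.e. $$\rho^n=\rho^n_{(0)}+\varepsilon^2\rho^n_{(2)},\qquad \mathbf{u}^n=\mathbf{u}^n_{(0)}+\varepsilon\mathbf{u}^n_{(1)},$$ with $\rho^n_{(0)}>0$, $\rho^n_{(2)}$, $\mathbf{u}^n_{(0)}$, $\mathbf{u}^n_{(1)}$ smooth and independent of $\varepsilon$, $\nabla\rho^n_{(0)}=0$ and $\nabla\cdot\mathbf{u}^n_{(0)}=0$, and put $\mathbf{q}^n=\rho^n\mathbf{u}^n$. Suppose that for all sufficiently small $\varepsilon>0$ the stage values $\rho^k,\mathbf{q}^k$ ($k=1,\dots,s$) exist, are positive in density, and admit expansions $$f=f_{(0)}+\varepsilon f_{(1)}+\varepsilon^2 f_{(2)}+r_\varepsilon,$$ with coefficients $f_{(i)}$ smooth and independent of $\varepsilon$ and $r_\varepsilon=o(\varepsilon^2)$ in $C^1(\mathbb{T}^d)$ as $\varepsilon\to0$ (for $f\in\{\rho^k,\mathbf{u}^k\}$, $\mathbf{u}^k=\mathbf{q}^k/\rho^k$). Then for every $k=1,\dots,s$: (i) $\rho^k_{(0)}=\rho^n_{(0)}$ (in particular spatially constant) and $\rho^k_{(1)}$ is spatially constant; (ii) $\nabla\cdot\mathbf{u}^k_{(0)}=0$. Consequently $(\rho^{n+1},\mathbf{u}^{n+1})=(\rho^s,\mathbf{u}^s)$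 is again well prepared: $\rho^{n+1}_{(0)}=\rho^n_{(0)}$ is constant and $\nabla\cdot\mathbf{u}^{n+1}_{(0)}=0$. Moreover the leading order velocity satisfies $$\mathbf{u}^{n+1}_{(0)}=\mathbf{u}^n_{(0)}-\Delta t\sum_{k=1}^s\tilde\omega_k\nabla\cdot\big(\mathbf{u}^k_{(0)}\otimes\mathbf{u}^k_{(0)}\big)-\frac{\Delta t}{\rho^n_{(0)}}\sum_{k=1}^s\omega_k\nabla p^k_{(2)},\qquad \nabla\cdot \mathbf{u}^{n+1}_{(0)}=0,$$ where $p^k_{(2)}$ denotes the $\varepsilon^2$-coefficient in the expansion of $p(\rho^k)$, i.e. the limit scheme is a time discretisation of the incompressible Euler system $\partial_t\mathbf{u}+\nabla\cdot(\mathbf{u}\otimes\mathbf{u})+\nabla \pi=0$, $\nabla\cdot\mathbf{u}=0$.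
   Context: Isentropic Euler system (scaled): $\partial_t\rho+\nabla\cdot(\rho\mathbf{u})=0$, $\partial_t(\rho\mathbf{u})+\nabla\cdot(\rho\mathbf{u}\otimes\mathbf{u})+\varepsilon^{-2}\nabla p(\rho)=0$ on the torus $\mathbb{T}^d$ (periodic boundary conditions), with $p(\rho)=\rho^\gamma$, $\gamma>0$, and Mach number parameter $\varepsilon>0$; $\mathbf{q}=\rho\mathbf{u}$. IMEX-RK scheme: real matrices $\tilde A=(\tilde a_{k,j}),A=(a_{k,j})\in\mathbb{R}^{s\times s}$ and weights $\tilde\omega,\omega\in\mathbb{R}^s$, with $\tilde a_{k,j}=0$ for $j\ge k$ and $a_{k,j}=0$ for $j>k$ (diagonally implicit). It is GSA if $\tilde a_{s,j}=\tilde\omega_j$ and $a_{s,j}=\omega_j$ for all $j$. It is of type A if $A$ is invertible (i.e. $a_{k,k}\neq0$ for all $k$), and of type CK if $s\ge2$, the first row of $A$ is zero and the lower right $(s-1)\times(s-1)$ block of $A$ is invertible. Time semi-discrete scheme: for $k=1,\dots,s$, $\rho^k=\rho^n-\Delta t\sum_{l=1}^{k}a_{k,l}\nabla\cdot\mathbf{q}^l$, $\mathbf{q}^k=\mathbf{q}^n-\Delta t\sum_{\ell=1}^{k-1}\tilde a_{k,\ell}\nabla\cdot\big(\mathbf{q}^\ell\otimes\mathbf{q}^\ell/\rho^\ell\big)-\frac{\Delta t}{\varepsilon^2}\sum_{l=1}^k a_{k,l}\nabla p(\rho^l)$, and $\rho^{n+1}=\rho^n-\Delta t\sum_k\omega_k\nabla\cdot\mathbf{q}^k$,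 $\mathbf{q}^{n+1}=\mathbf{q}^n-\Delta t\sum_k\tilde\omega_k\nabla\cdot(\mathbf{q}^k\otimes\mathbf{q}^k/\rho^k)-\frac{\Delta t}{\varepsilon^2}\sum_k\omega_k\nabla p(\rho^k)$; for a GSA scheme $(\rho^{n+1},\mathbf{q}^{n+1})=(\rho^s,\mathbf{q}^s)$. *)

From Stdlib Require Import Reals ClassicalEpsilon.
From mathcomp Require Import ssreflect ssrfun ssrbool eqtype ssrnat seq fintype bigop.
Set Implicit Arguments.
Unset Strict Implicit.
Open Scope R_scope.

(* A point of R^d; functions on the torus T^d = R^d / Z^d are the
   1-periodic functions on R^d (see [periodic]). *)
Definition pt (d : nat) := 'I_d -> R.

Definition shift {d} (x : pt d) (i : 'I_d) (t : R) : pt d :=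
  fun j => if j == i then x j + t else x j.

(* Partial derivative d/dx_i f (x) (meaningful when it exists). *)
Definition pd {d} (i : 'I_d) (f : pt d -> R) (x : pt d) : R :=
  epsilon (inhabits 0) (fun l => derivable_pt_lim (fun t => f (shift x i t)) 0 l).

Definition sumI (d : nat) (F : 'I_d -> R) : R := \big[Rplus/0]_(j < d) F j.
Definition sumN (m n : nat) (F : nat -> R) : R := \big[Rplus/0]_(m <= l < n) F l.

Definition div {d} (F : pt d -> 'I_d -> R) (x : pt d) : R :=
  @sumI d (fun j => pd j (fun y => F y j) x).

Definition cont {d} (f : pt d -> R) : Prop :=
  forall x eps, 0 < eps -> exists delta, 0 < delta /\
    forall y, (forall i, Rabs (y i - x i) < delta) -> Rabs (f y - f x) < eps.

Definition periodic {d} (f : pt d -> R) : Prop :=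
  forall x i, f (shift x i 1) = f x.

Fixpoint Ck {d} (k : nat) (f : pt d -> R) : Prop :=
  cont f /\
  match k with
  | O => True
  | S k' => forall i, (forall x, exists l, derivable_pt_lim (fun t => f (shift x i t)) 0 l)
                      /\ Ck k' (pd i f)
  end.

Definition smooth_T {d} (f : pt d -> R) : Prop := periodic f /\ forall k, Ck k f.

Definition small2 {d} (r : R -> pt d -> R) : Prop :=
  forall eta, 0 < eta -> exists e0, 0 < e0 /\
    forall e, 0 < e < e0 ->
      Ck 1 (r e) /\
      forall x, Rabs (r e x) <= eta * e ^ 2 /\
                forall i, Rabs (pd i (r e) x) <= eta * e ^ 2.

Definition expand2 {d} (F : R -> pt d -> R) (f0 f1 f2 : pt d -> R) : Prop :=
  smooth_T f0 /\ smooth_T f1 /\ smooth_T f2 /\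
  small2 (fun e x => F e x - f0 x - e * f1 x - e ^ 2 * f2 x).

Definition press (gamma r : R) : R := Rpower r gamma.

(* Butcher tableaux, stages indexed 0..s-1. *)
Definition DIRK (s : nat) (At A : nat -> nat -> R) : Prop :=
  forall k j, (k < s)%N -> (j < s)%N ->
    ((k <= j)%N -> At k j = 0) /\ ((k < j)%N -> A k j = 0).

Definition GSA (s : nat) (At A : nat -> nat -> R) (wt w : nat -> R) : Prop :=
  forall j, (j < s)%N -> At (s - 1)%N j = wt j /\ A (s - 1)%N j = w j.

(* type A: A invertible; A is lower triangular, so this is a_kk <> 0 *)
Definition typeA (s : nat) (A : nat -> nat -> R) : Prop :=
  forall k, (k < s)%N -> A k k <> 0.

(* type CK: s >= 2, first row of A zero, lower-right (s-1)x(s-1) block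
   invertible; that block is lower triangular, so this is a_kk <> 0, k >= 1 *)
Definition typeCK (s : nat) (A : nat -> nat -> R) : Prop :=
  (2 <= s)%N /\ (forall j, (j < s)%N -> A 0%N j = 0) /\
  (forall k, (1 <= k)%N -> (k < s)%N -> A k k <> 0).

Definition IMEX_stage {d} (gamma dt eps : R) (At A : nat -> nat -> R)
  (rhon : pt d -> R) (qn : pt d -> 'I_d -> R)
  (rho : nat -> pt d -> R) (q : nat -> pt d -> 'I_d -> R) (k : nat) : Prop :=
  (forall x, rho k x = rhon x - dt * sumN 0 k.+1 (fun l => A k l * div (q l) x)) /\
  (forall x i, q k x i =
      qn x i
      - dt * sumN 0 k (fun l => At k l *
               div (fun y j => q l y i * q l y j / rho l y) x)
      - dt / eps ^ 2 * sumN 0 k.+1 (fun l => A k l *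
               pd i (fun y => press gamma (rho l y)) x)).

(* The proof works pointwise in x and passes to the limit eps -> 0+ in the
   stage equations of the scheme, order by order in eps:
   - the density equation at order 0 expresses rho^k_(0) through the divergences
     of the leading momenta rho^l_(0) u^l_(0), l <= k;
   - the momentum equation multiplied by eps^2 gives, at orders 0, 1 and 2,
       sum_l a_kl grad p^l_(0) = 0,  sum_l a_kl grad p^l_(1) = 0,
       sum_l a_kl grad p^l_(2) = (q^n_(0) - q^k_(0) - dt sum_l at_kl div(...)) / dt.
   Since A is lower triangular with nonzero diagonal (type A), or has a zero
   first row whose stage is the data itself (type CK), the first two systems
   force grad p^k_(0) = grad p^k_(1) = 0, i.e. rho^k_(0) and rho^k_(1) are
   spatially constant.  By induction on k the density equation then makes
   div u^k_(0) a constant, and a constant divergence of a smooth periodic field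
   vanishes (its integral over the torus is zero; we use discrete Riemann sums
   on a uniform grid, telescoping by periodicity, and a second-order Taylor
   bound, with a uniform bound obtained by compactness of the unit cube).
   Finally GSA identifies the last stage with the new time level, and the
   order-2 identity for k = s-1 is the announced incompressible limit scheme. *)
From Stdlib Require Import Reals Lra FunctionalExtensionality ClassicalEpsilon Classical.
From HB Require Import structures.
From mathcomp Require Import ssreflect ssrfun ssrbool eqtype ssrnat seq fintype finfun div bigop.
Set Implicit Arguments.
Unset Strict Implicit.
Open Scope R_scope.

HB.instance Definition _ :=
  Monoid.isComLaw.Build R 0 Rplus (fun a b c => esym (Rplus_assoc a b c)) Rplus_comm Rplus_0_l.

(** * Limits as eps -> 0+ *)

Definition lim0 (g : R -> R) (l : R) : Prop := forall eta, 0 < eta ->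
  exists del, 0 < del /\ forall e, 0 < e < del -> Rabs (g e - l) < eta.

Definition near0 (P : R -> Prop) : Prop :=
  exists del, 0 < del /\ forall e, 0 < e < del -> P e.

Lemma near0_and P Q : near0 P -> near0 Q -> near0 (fun e => P e /\ Q e).
Proof.
move=> [d1 [h1 H1]] [d2 [h2 H2]]; exists (Rmin d1 d2); split; first exact: Rmin_pos.
move=> e [he1 he2]; have := Rmin_l d1 d2; have := Rmin_r d1 d2.
split; [apply: H1 | apply: H2]; lra.
Qed.

Lemma near0_mono (P Q : R -> Prop) : (forall e, 0 < e -> P e -> Q e) -> near0 P -> near0 Q.
Proof. move=> H [d [hd Hd]]; exists d; split=> // e he; apply: H; [lra | exact: Hd]. Qed.

Lemma near0_true (P : R -> Prop) : (forall e, 0 < e -> P e) -> near0 P.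
Proof. move=> H; exists 1; split; [lra | move=> e he; apply: H; lra]. Qed.

Lemma lim0_ext g h l : near0 (fun e => g e = h e) -> lim0 g l -> lim0 h l.
Proof.
move=> E H eta heta; have [d1 [h1 H1]] := H eta heta.
have [d [hd Hd]] := near0_and E (ex_intro _ d1 (conj h1 H1)).
by exists d; split=> // e he; have [<- ?] := Hd e he.
Qed.

Lemma lim0_const c : lim0 (fun _ => c) c.
Proof. move=> eta he; exists 1; split=> [|e _]; rewrite ?Rminus_diag ?Rabs_R0; lra. Qed.

Lemma lim0_id : lim0 (fun e => e) 0.
Proof. move=> eta he; exists eta; split=> // e [h1 h2]; rewrite Rminus_0_r Rabs_right; lra. Qed.

Lemma lim0_plus g h a b : lim0 g a -> lim0 h b -> lim0 (fun e => g e + h e) (a + b).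
Proof.
move=> G H eta heta.
have [d [hd Hd]] := near0_and (G (eta / 2) ltac:(lra)) (H (eta / 2) ltac:(lra)).
exists d; split=> // e he; have [A B] := Hd e he.
replace (g e + h e - (a + b)) with ((g e - a) + (h e - b)) by ring.
apply: Rle_lt_trans (Rabs_triang _ _) _; lra.
Qed.

Lemma lim0_mult g h a b : lim0 g a -> lim0 h b -> lim0 (fun e => g e * h e) (a * b).
Proof.
move=> G H eta heta.
set M := Rabs a + Rabs b + 1.
have hM : 0 < M by rewrite /M; have := Rabs_pos a; have := Rabs_pos b; lra.
set t := Rmin 1 (eta / (2 * M)).
have ht : 0 < t by apply: Rmin_pos; [lra | apply: Rdiv_lt_0_compat; lra].
have ht1 : t <= 1 by apply: Rmin_l.
have ht2 : t * (2 * M) <= eta.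
  have -> : eta = eta / (2 * M) * (2 * M) by field; lra.
  apply: Rmult_le_compat_r; [lra | exact: Rmin_r].
have [d [hd Hd]] := near0_and (G t ht) (H t ht).
exists d; split=> // e he; have [A B] := Hd e he.
replace (g e * h e - a * b) with ((g e - a) * (h e - b) + (g e - a) * b + a * (h e - b)) by ring.
have X1 : Rabs ((g e - a) * (h e - b)) <= t * t.
  rewrite Rabs_mult; apply: Rmult_le_compat; try apply: Rabs_pos; lra.
have X2 : Rabs ((g e - a) * b) <= t * Rabs b.
  rewrite Rabs_mult; apply: Rmult_le_compat_r; [apply: Rabs_pos | lra].
have X3 : Rabs (a * (h e - b)) <= Rabs a * t.
  rewrite Rabs_mult; apply: Rmult_le_compat_l; [apply: Rabs_pos | lra].
apply: Rle_lt_trans (Rabs_triang _ _) _.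
apply: Rle_lt_trans (Rplus_le_compat_r _ _ _ (Rabs_triang _ _)) _.
have : t * M < eta by nra.
rewrite /M; nra.
Qed.

Lemma lim0_scal c g a : lim0 g a -> lim0 (fun e => c * g e) (c * a).
Proof. exact: lim0_mult (lim0_const c). Qed.

Lemma lim0_minus g h a b : lim0 g a -> lim0 h b -> lim0 (fun e => g e - h e) (a - b).
Proof.
move=> G H; have := lim0_plus G (lim0_scal (-1) H).
by rewrite -Ropp_mult_distr_l Rmult_1_l; apply: lim0_ext; apply: near0_true => e _; ring.
Qed.

Lemma lim0_unique g a b : lim0 g a -> lim0 g b -> a = b.
Proof.
move=> A B; apply: NNPP => Hn.
have H : 0 < Rabs (a - b) by apply: Rabs_pos_lt; lra.
have [d [hd Hd]] := near0_and (A (Rabs (a - b) / 2) ltac:(lra)) (B (Rabs (a - b) / 2) ltac:(lra)).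
have [X Y] := Hd (d / 2) ltac:(lra).
have : Rabs (a - b) <= Rabs (g (d / 2) - b) + Rabs (g (d / 2) - a).
  replace (a - b) with ((g (d / 2) - b) - (g (d / 2) - a)) by ring.
  apply: Rle_trans (Rabs_triang _ _) _; rewrite Rabs_Ropp; lra.
lra.
Qed.

Lemma lim0_nonneg (g : R -> R) a : near0 (fun e => 0 < g e) -> lim0 g a -> 0 <= a.
Proof.
move=> P H; apply: Rnot_lt_le => ha.
have [d [hd Hd]] := near0_and P (H (- a) ltac:(lra)).
have [h1 /Rabs_def2 [h2 _]] := Hd (d / 2) ltac:(lra); lra.
Qed.

Lemma lim0_big (I : eqType) (r : seq I) (P : pred I) (G : I -> R -> R) (a : I -> R) :
  (forall j, j \in r -> P j -> lim0 (G j) (a j)) ->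
  lim0 (fun e => \big[Rplus/0]_(j <- r | P j) G j e) (\big[Rplus/0]_(j <- r | P j) a j).
Proof.
elim: r => [|x r IH] H.
  by rewrite big_nil; apply: lim0_ext (lim0_const 0); apply: near0_true => e _; rewrite big_nil.
have Hr : lim0 (fun e => \big[Rplus/0]_(j <- r | P j) G j e) (\big[Rplus/0]_(j <- r | P j) a j).
  by apply: IH => j jr; apply: H; rewrite inE jr orbT.
rewrite big_cons; case Px: (P x); last first.
  by apply: lim0_ext Hr; apply: near0_true => e _; rewrite big_cons Px.
apply: lim0_ext (lim0_plus (H x (mem_head _ _) Px) Hr).
by apply: near0_true => e _; rewrite big_cons Px.
Qed.

Lemma lim0_sumN n (G : nat -> R -> R) (a : nat -> R) :
  (forall l, (l < n)%N -> lim0 (G l) (a l)) ->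
  lim0 (fun e => sumN 0 n (fun l => G l e)) (sumN 0 n a).
Proof. move=> H; apply: lim0_big => l; rewrite mem_index_iota => /andP [_ hl] _; exact: H. Qed.

Lemma lim0_diff_quot (f : R -> R) a l (rho : R -> R) :
  derivable_pt_lim f a l -> lim0 rho a ->
  lim0 (fun e => if Req_EM_T (rho e) a then l else (f (rho e) - f a) / (rho e - a)) l.
Proof.
move=> Df Hr eta heta.
have [del Hd] := Df eta heta.
have [d1 [h1 H1]] := Hr del (cond_pos del).
exists d1; split=> // e he.
case: (Req_EM_T (rho e) a) => [Heq|hne]; first by rewrite Rminus_diag Rabs_R0.
have := Hd (rho e - a) ltac:(lra) (H1 e he).
by rewrite (_ : a + (rho e - a) = rho e) //; ring.
Qed.

Lemma lim0_comp (f : R -> R) a l (rho : R -> R) :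
  derivable_pt_lim f a l -> lim0 rho a -> lim0 (fun e => f (rho e)) (f a).
Proof.
move=> Df Hr; have Q := lim0_diff_quot Df Hr.
have := lim0_plus (lim0_const (f a)) (lim0_mult Q (lim0_minus Hr (lim0_const a))).
rewrite Rminus_diag Rmult_0_r Rplus_0_r; apply: lim0_ext; apply: near0_true => e he.
case: (Req_EM_T (rho e) a) => [Heq | hne] /=; last by field; lra.
by rewrite Heq Rminus_diag; ring.
Qed.

Lemma lim0_chain (f : R -> R) a l (rho : R -> R) b :
  derivable_pt_lim f a l -> lim0 rho a -> lim0 (fun e => (rho e - a) / e) b ->
  lim0 (fun e => (f (rho e) - f a) / e) (l * b).
Proof.
move=> Df Hr Hb; apply: lim0_ext (lim0_mult (lim0_diff_quot Df Hr) Hb).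
apply: near0_true => e he; case: (Req_EM_T (rho e) a) => [Heq | hne] /=; last by field; lra.
by rewrite Heq !Rminus_diag /Rdiv !Rmult_0_l Rmult_0_r.
Qed.

Lemma lim0_coeffs (g : R -> R) a b c :
  lim0 (fun e => (g e - a - e * b - e ^ 2 * c) / e ^ 2) 0 ->
  lim0 g a /\ lim0 (fun e => (g e - a) / e) b /\ lim0 (fun e => (g e - a - e * b) / e ^ 2) c.
Proof.
move=> H; set r := fun e => _ in H.
have E : near0 (fun e => g e = a + e * b + e ^ 2 * c + e ^ 2 * r e).
  by apply: near0_true => e he; rewrite /r; field; lra.
split; [|split].
- have := lim0_plus (lim0_plus (lim0_plus (lim0_const a) (lim0_mult lim0_id (lim0_const b)))
    (lim0_mult (lim0_mult lim0_id lim0_id) (lim0_const c))) (lim0_mult (lim0_mult lim0_id lim0_id) H).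
  rewrite !Rmult_0_l !Rplus_0_r; apply: lim0_ext; apply: near0_mono E => e _ -> /=; ring.
- have := lim0_plus (lim0_plus (lim0_const b) (lim0_mult lim0_id (lim0_const c))) (lim0_mult lim0_id H).
  rewrite !Rmult_0_l !Rplus_0_r; apply: lim0_ext; apply: near0_mono E => e he -> /=; field; lra.
- have := lim0_plus (lim0_const c) H.
  rewrite Rplus_0_r; apply: lim0_ext; apply: near0_mono E => e he -> /=; field; lra.
Qed.

Lemma match_orders (a b c m : R) (rem M : R -> R) :
  near0 (fun e => a + e * b + e ^ 2 * c + rem e = e ^ 2 * M e) ->
  lim0 (fun e => rem e / e ^ 2) 0 -> lim0 M m -> a = 0 /\ b = 0 /\ c = m.
Proof.
move=> E HR HM; set g := fun e => a + e * b + e ^ 2 * c + rem e.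
have Hg : lim0 (fun e => (g e - a - e * b - e ^ 2 * c) / e ^ 2) 0.
  by apply: lim0_ext HR; apply: near0_true => e he; rewrite /g; field; lra.
have [L0 [L1 L2]] := lim0_coeffs Hg.
have L0' : lim0 g 0.
  have := lim0_mult (lim0_mult lim0_id lim0_id) HM; rewrite !Rmult_0_l.
  by apply: lim0_ext; apply: near0_mono E => e _; rewrite /g /= => ->; ring.
have L1' : lim0 (fun e => (g e - 0) / e) 0.
  have := lim0_mult lim0_id HM; rewrite Rmult_0_l.
  by apply: lim0_ext; apply: near0_mono E => e he; rewrite /g /= => ->; field; lra.
have ha := lim0_unique L0 L0'; rewrite ha in L1.
have hb := lim0_unique L1 L1'; rewrite ha hb in L2.
split=> //; split=> //; apply: lim0_unique L2 _.
by apply: lim0_ext HM; apply: near0_mono E => e he; rewrite /g => ->; field; lra.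
Qed.

(** * Finite sums *)

Lemma big_scal (I : Type) (r : seq I) (P : pred I) (F : I -> R) c :
  \big[Rplus/0]_(i <- r | P i) (c * F i) = c * \big[Rplus/0]_(i <- r | P i) F i.
Proof. by apply: (big_ind2 (fun x y => x = c * y)) => [|x1 x2 y1 y2 -> ->|]; rewrite //; ring. Qed.

Lemma big_sub (I : Type) (r : seq I) (P : pred I) (F G : I -> R) :
  \big[Rplus/0]_(i <- r | P i) (F i - G i) =
  \big[Rplus/0]_(i <- r | P i) F i - \big[Rplus/0]_(i <- r | P i) G i.
Proof.
by apply: (big_ind3 (fun x y z => x = y - z)) => [|x1 x2 x3 y1 y2 y3 -> ->|]; rewrite //; ring.
Qed.

Lemma big_le (I : Type) (r : seq I) (P : pred I) (F G : I -> R) : (forall i, F i <= G i) ->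
  \big[Rplus/0]_(i <- r | P i) F i <= \big[Rplus/0]_(i <- r | P i) G i.
Proof. by move=> H; apply: (big_ind2 (fun x y => x <= y)) => *; [lra | lra | exact: H]. Qed.

Lemma big_abs (I : Type) (r : seq I) (P : pred I) (F : I -> R) :
  Rabs (\big[Rplus/0]_(i <- r | P i) F i) <= \big[Rplus/0]_(i <- r | P i) Rabs (F i).
Proof.
apply: (big_ind2 (fun x y => Rabs x <= y)); first by rewrite Rabs_R0; lra.
- by move=> x1 x2 y1 y2 h1 h2; apply: Rle_trans (Rabs_triang _ _) _; lra.
- by move=> i _; lra.
Qed.

Lemma big_ge_term (I : finType) (F : I -> R) i0 :
  (forall i, 0 <= F i) -> F i0 <= \big[Rplus/0]_(i : I) F i.
Proof.
move=> H; rewrite (bigD1 i0) //=.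
have : 0 <= \big[Rplus/0]_(i | i != i0) F i by apply: (big_ind (fun x => 0 <= x)) => *; [lra | lra | exact: H].
lra.
Qed.

Lemma sumN_rec m n F : (m <= n)%N -> sumN m n.+1 F = sumN m n F + F n.
Proof. by move=> h; rewrite /sumN big_nat_recr. Qed.

Lemma sumN_ext n F G : (forall l, (l < n)%N -> F l = G l) -> sumN 0 n F = sumN 0 n G.
Proof. by move=> H; apply: eq_big_nat => l /andP [_ h]; exact: H. Qed.

Lemma sumN_zero n F : (forall l, (l < n)%N -> F l = 0) -> sumN 0 n F = 0.
Proof. by move=> H; apply: big1_seq => l /andP [_]; rewrite mem_index_iota => /andP [_ /H]. Qed.

Lemma sumN_expand n (a X Y Z W : nat -> R) e :
  sumN 0 n (fun l => a l * (X l + e * Y l + e ^ 2 * Z l + e ^ 2 * W l)) =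
  sumN 0 n (fun l => a l * X l) + e * sumN 0 n (fun l => a l * Y l) +
  e ^ 2 * sumN 0 n (fun l => a l * Z l) + e ^ 2 * sumN 0 n (fun l => a l * W l).
Proof. by rewrite /sumN -!big_scal -!big_split; apply: eq_bigr => l _ /=; ring. Qed.

Lemma lower_triangular_zero s (A : nat -> nat -> R) (v : nat -> R) :
  (forall k, (k < s)%N -> sumN 0 k.+1 (fun l => A k l * v l) = 0) ->
  (forall k, (k < s)%N -> A k k <> 0 \/ v k = 0) -> forall k, (k < s)%N -> v k = 0.
Proof.
move=> H1 H2; elim/ltn_ind => k IH hk.
have Z : sumN 0 k (fun l => A k l * v l) = 0.
  by apply: sumN_zero => l hl; rewrite IH ?Rmult_0_r //; apply: ltn_trans hl hk.
have := H1 k hk; rewrite sumN_rec // Z Rplus_0_l => E.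
case: (H2 k hk) => // hA; by apply: (Rmult_eq_reg_l (A k k)); rewrite ?Rmult_0_r.
Qed.

(** * Partial derivatives *)

Definition has_pd {d} (i : 'I_d) (f : pt d -> R) (x : pt d) (l : R) : Prop :=
  derivable_pt_lim (fun t => f (shift x i t)) 0 l.

Lemma shift0 d (x : pt d) i : shift x i 0 = x.
Proof. by apply: functional_extensionality => j; rewrite /shift; case: (j == i); rewrite ?Rplus_0_r. Qed.

Lemma shift_shift d (x : pt d) i a b : shift (shift x i a) i b = shift x i (a + b).
Proof.
by apply: functional_extensionality => j; rewrite /shift; case: (j == i); rewrite ?Rplus_assoc.
Qed.

Lemma pd_spec d i (f : pt d -> R) x : (exists l, has_pd i f x l) -> has_pd i f x (pd i f x).
Proof. exact: (epsilon_spec (inhabits 0) (fun l => has_pd i f x l)). Qed.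

Lemma pd_eq d i (f : pt d -> R) x l : has_pd i f x l -> pd i f x = l.
Proof. by move=> H; apply: uniqueness_limite (pd_spec (ex_intro _ l H)) H. Qed.

Lemma has_pd_ext d i (f g : pt d -> R) x l : (forall y, f y = g y) -> has_pd i f x l -> has_pd i g x l.
Proof. by move=> /functional_extensionality ->. Qed.

Lemma pd_ext d i (f g : pt d -> R) x : (forall y, f y = g y) -> pd i f x = pd i g x.
Proof. by move=> /functional_extensionality ->. Qed.

Lemma has_pd_plus d i (f g : pt d -> R) x a b : has_pd i f x a -> has_pd i g x b ->
  has_pd i (fun y => f y + g y) x (a + b).
Proof. exact: derivable_pt_lim_plus. Qed.

Lemma has_pd_mult d i (f g : pt d -> R) x a b : has_pd i f x a -> has_pd i g x b ->
  has_pd i (fun y => f y * g y) x (a * g x + f x * b).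
Proof. by move=> F G; have := derivable_pt_lim_mult _ _ _ _ _ F G; rewrite /has_pd /= shift0. Qed.

Lemma has_pd_scal d i (f : pt d -> R) x c a : has_pd i f x a -> has_pd i (fun y => c * f y) x (c * a).
Proof. exact: derivable_pt_lim_scal. Qed.

Lemma has_pd_const d i (x : pt d) c : has_pd i (fun _ => c) x 0.
Proof. exact: derivable_pt_lim_const. Qed.

Lemma pd_const_fun d i (f : pt d -> R) x c : (forall y, f y = c) -> pd i f x = 0.
Proof. by move=> H; rewrite (pd_ext i x H); apply: pd_eq; apply: has_pd_const. Qed.

Lemma has_pd_line d i (f : pt d -> R) x t l : has_pd i f (shift x i t) l ->
  derivable_pt_lim (fun u => f (shift x i u)) t l.
Proof.
move=> H eps he; have [del Hd] := H eps he; exists del => h h0 hd.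
by have := Hd h h0 hd; rewrite !shift_shift Rplus_0_r Rplus_0_l.
Qed.

Lemma Ck_cont d k (f : pt d -> R) : Ck k f -> cont f.
Proof. by case: k => [[]|k []]. Qed.

Lemma Ck_has_pd d k (f : pt d -> R) : Ck k.+1 f -> forall i x, exists l, has_pd i f x l.
Proof. by move=> [_ H] i; exact: (H i).1. Qed.

Lemma Ck_pd d k (f : pt d -> R) : Ck k.+1 f -> forall i, Ck k (pd i f).
Proof. by move=> [_ H] i; exact: (H i).2. Qed.

Lemma smooth_has_pd d (f : pt d -> R) : smooth_T f -> forall i x, has_pd i f x (pd i f x).
Proof. by move=> [_ H] i x; apply: pd_spec; exact: (Ck_has_pd (H 1%N)). Qed.

Lemma smooth_has_pd2 d (f : pt d -> R) : smooth_T f ->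
  forall i j x, has_pd j (pd i f) x (pd j (pd i f) x).
Proof. by move=> [_ H] i j x; apply: pd_spec; exact: (Ck_has_pd (Ck_pd (H 2%N) i)). Qed.

Lemma line_const d i (f : pt d -> R) x : (forall t, has_pd i f (shift x i t) 0) ->
  forall t, f (shift x i t) = f x.
Proof.
move=> H t.
have D c : derivable_pt_lim (fun u => f (shift x i u)) c ((fun _ => 0) c) by exact: has_pd_line.
case: (Rtotal_order t 0) => [ht|[->|ht]]; last 2 [by rewrite shift0].
all: have [c [Hc _]] := MVT_cor2 (fun u => f (shift x i u)) (fun _ => 0) _ _ ht (fun c _ => D c).
all: rewrite shift0 in Hc; lra.
Qed.

(* A function with vanishing gradient is constant: walk from x to y one
   coordinate at a time. *)
Lemma grad0_const d (f : pt d -> R) : (forall i x, has_pd i f x 0) -> forall x y, f x = f y.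
Proof.
move=> H x y.
pose z (m : nat) : pt d := fun j => if (j < m)%N then y j else x j.
have Zd : z d = y by apply: functional_extensionality => j; rewrite /z ltn_ord.
suff S m : (m <= d)%N -> f (z m) = f x by rewrite -Zd S.
elim: m => [|m IH] hm; first by congr f; apply: functional_extensionality.
have E : z m.+1 = shift (z m) (Ordinal hm) (y (Ordinal hm) - x (Ordinal hm)).
  apply: functional_extensionality => j; rewrite /z /shift ltnS -val_eqE /=.
  case: (ltngtP j m) => [h|h|h] //; rewrite (_ : j = Ordinal hm); first ring.
  exact: val_inj.
by rewrite E line_const; [apply: IH; exact: ltnW | move=> t; exact: H].
Qed.

(** * Continuous functions are bounded on the unit cube *)

Lemma nested_intervals (a b : nat -> R) :
  (forall n, a n <= a n.+1) -> (forall n, b n.+1 <= b n) -> (forall n, a n <= b n) ->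
  {z | forall n, a n <= z <= b n}.
Proof.
move=> ha hb hab.
have mono m n : (m <= n)%N -> a m <= a n /\ b n <= b m.
  move=> /subnK <-; elim: (n - m)%N => [|k IH]; rewrite ?add0n; first lra.
  by rewrite addSn; have := ha (k + m)%N; have := hb (k + m)%N; lra.
have below m n : a m <= b n.
  case: (leqP m n) => h; have [h1 h2] := mono _ _ h.
  - by have := hab n; lra.
  - by have := hab m; have [_ ?] := mono _ _ (ltnW h); lra.
have ub : has_ub a by exists (b 0%N) => _ [n ->]; exact: below.
have [z hz] := growing_cv a ha ub.
exists z => n; split; first exact: growing_ineq ha hz n.
apply: (Rle_cv_lim (fun m => below m n) hz) => eps he.
by exists 0%N => m _; rewrite /R_dist Rminus_diag Rabs_R0.
Qed.

Lemma common_bound (I : finType) (X : Type) (Q : I -> X -> Prop) (g : I -> X -> R) :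
  (forall j, exists M, forall x, Q j x -> Rabs (g j x) <= M) ->
  exists M, forall j x, Q j x -> Rabs (g j x) <= M.
Proof.
move=> H; pose Mj j := epsilon (inhabits 0) (fun M => forall x, Q j x -> Rabs (g j x) <= M).
exists (\big[Rplus/0]_(j : I) Rabs (Mj j)) => j x hx.
apply: Rle_trans (epsilon_spec (inhabits 0) _ (H j) x hx) _.
apply: Rle_trans (Rle_abs _) _; exact: (@big_ge_term _ (fun j => Rabs (Mj j)) j (fun j => Rabs_pos _)).
Qed.

Lemma inv_pow2_lt eps : 0 < eps -> exists n, / 2 ^ n < eps.
Proof.
move=> he; have [n [hn hn0]] := archimed_cor1 eps he; exists n; apply: Rle_lt_trans hn.
apply: Rinv_le_contravar; first exact: lt_0_INR.
elim: n {hn0} => [|n IH]; first by rewrite /=; lra.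
rewrite S_INR /=; have : 1 <= 2 ^ n by apply: pow_R1_Rle; lra.
lra.
Qed.

Section BoundedOnCube.
Variables (d : nat) (f : pt d -> R).

Definition in_cube (lo : pt d) (w : R) (x : pt d) : Prop := forall j, lo j <= x j <= lo j + w.
Definition unbounded_on (lo : pt d) (w : R) : Prop :=
  forall M, exists x, in_cube lo w x /\ M < Rabs (f x).
(* the 2^d subcubes of half width, indexed by the choice of lower/upper half
   in each coordinate *)
Definition subcube (lo : pt d) (w : R) (b : {ffun 'I_d -> bool}) : pt d :=
  fun j => lo j + (if b j then w / 2 else 0).

Lemma unbounded_subcube lo w : unbounded_on lo w -> exists b, unbounded_on (subcube lo w b) (w / 2).
Proof.
move=> U; apply: NNPP => H.
have [M HM] : exists M, forall b x, in_cube (subcube lo w b) (w / 2) x -> Rabs (f x) <= M.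
  apply: (@common_bound _ _ (fun b => in_cube (subcube lo w b) (w / 2)) (fun b x => f x)) => b.
  apply: NNPP => H2; apply: H; exists b => M.
  apply: NNPP => H3; apply: H2; exists M => x hx; apply: Rnot_lt_le => H4; apply: H3; by exists x.
have [x [hx hM]] := U M.
pose bx : {ffun 'I_d -> bool} := [ffun j => if Rle_dec (lo j + w / 2) (x j) then true else false].
have : in_cube (subcube lo w bx) (w / 2) x.
  by move=> j; rewrite /subcube /bx ffunE; have := hx j; case: Rle_dec => /= h; lra.
by move/HM; lra.
Qed.

Definition bisect (C : pt d * R) : pt d * R :=
  epsilon (inhabits C) (fun C' => exists b, C' = (subcube C.1 C.2 b, C.2 / 2) /\ unbounded_on C'.1 C'.2).

Fixpoint bisections (n : nat) : pt d * R :=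
  match n with O => (fun _ => 0, 1) | S n => bisect (bisections n) end.

Lemma bisect_spec C : unbounded_on C.1 C.2 ->
  (exists b, (bisect C).1 = subcube C.1 C.2 b) /\ (bisect C).2 = C.2 / 2 /\
  unbounded_on (bisect C).1 (bisect C).2.
Proof.
move=> /unbounded_subcube [b hb].
have [b' [E hU]] : exists b', bisect C = (subcube C.1 C.2 b', C.2 / 2) /\
    unbounded_on (bisect C).1 (bisect C).2.
  apply: (epsilon_spec (inhabits C) (fun C' => exists b, C' = _ /\ unbounded_on C'.1 C'.2)).
  by exists (subcube C.1 C.2 b, C.2 / 2), b.
by move: hU; rewrite E /= => hU; split; [exists b' | split].
Qed.

Lemma bisections_spec : unbounded_on (fun _ => 0) 1 ->
  forall n, (bisections n).2 = / 2 ^ n /\ unbounded_on (bisections n).1 (bisections n).2.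
Proof.
move=> U0; elim=> [|n [IH1 IH2]]; first by rewrite /= Rinv_1.
have [_ [hw hU]] := bisect_spec IH2; split=> //=.
rewrite hw IH1 /=; field; apply: pow_nonzero; lra.
Qed.

Hypothesis f_cont : cont f.

(* Bolzano-Weierstrass by bisection: an unbounded f would be unbounded near
   the common point of the nested cubes, contradicting continuity there. *)
Lemma bounded_on_unit_cube : exists M, forall x, in_cube (fun _ => 0) 1 x -> Rabs (f x) <= M.
Proof.
apply: NNPP => Hnb.
have U0 : unbounded_on (fun _ => 0) 1.
  move=> M; apply: NNPP => H2; apply: Hnb; exists M => x hx; apply: Rnot_lt_le => H3.
  by apply: H2; exists x.
have S := bisections_spec U0.
have Wp n : 0 < / 2 ^ n by apply: Rinv_0_lt_compat; apply: pow_lt; lra.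
have step n j : (bisections n).1 j <= (bisections n.+1).1 j /\
    (bisections n.+1).1 j + / 2 ^ n.+1 <= (bisections n).1 j + / 2 ^ n.
  have [W U] := S n; have [[b ->] _] := bisect_spec U.
  rewrite /subcube W (_ : / 2 ^ n.+1 = / 2 ^ n / 2); first by have := Wp n; case: (b j); lra.
  by rewrite /= Rinv_mult; lra.
have Z j := @nested_intervals (fun n => (bisections n).1 j) (fun n => (bisections n).1 j + / 2 ^ n)
  (fun n => proj1 (step n j)) (fun n => proj2 (step n j)) (fun n => ltac:(have := Wp n; lra)).
pose z : pt d := fun j => proj1_sig (Z j).
have [del [hdel Hdel]] := f_cont z Rlt_0_1.
have [n hn] := inv_pow2_lt hdel.
have [W U] := S n; have [x [hx hM]] := U (Rabs (f z) + 1).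
have : Rabs (f x - f z) < 1.
  apply: Hdel => j; have := proj2_sig (Z j) n; have := hx j; rewrite W -/(z j) => h1 h2.
  apply: Rabs_def1; lra.
have := Rabs_triang_inv (f x) (f z); lra.
Qed.
End BoundedOnCube.

(** * A constant divergence of a smooth periodic field vanishes *)

(* Second-order Taylor bound along a coordinate line (two mean value steps). *)
Lemma taylor2 d (f : pt d -> R) j x h M : smooth_T f -> 0 < h ->
  (forall t, 0 <= t <= h -> Rabs (pd j (pd j f) (shift x j t)) <= M) ->
  Rabs (f (shift x j h) - f x - h * pd j f x) <= M * (h * h).
Proof.
move=> Sf hh HM.
have D1 c : derivable_pt_lim (fun u => f (shift x j u)) c (pd j f (shift x j c)).
  by apply: has_pd_line; exact: smooth_has_pd.
have D2 c : derivable_pt_lim (fun u => pd j f (shift x j u)) c (pd j (pd j f) (shift x j c)).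
  by apply: has_pd_line; exact: smooth_has_pd2.
have [c [Hc hc]] := MVT_cor2 _ _ _ _ hh (fun c _ => D1 c).
have [c' [Hc' hc']] := MVT_cor2 _ _ _ _ (proj1 hc) (fun c _ => D2 c).
rewrite shift0 Rminus_0_r in Hc; rewrite shift0 Rminus_0_r in Hc'.
have -> : f (shift x j h) - f x - h * pd j f x = h * (c * pd j (pd j f) (shift x j c')).
  by rewrite Hc (_ : pd j f (shift x j c) = pd j f x + pd j (pd j f) (shift x j c') * c); [ring | lra].
rewrite !Rabs_mult (Rabs_right h) ?(Rabs_right c); try lra.
have := HM c' ltac:(lra); have := Rabs_pos (pd j (pd j f) (shift x j c')) => h1 h2.
have : c * Rabs (pd j (pd j f) (shift x j c')) <= h * M by apply: Rmult_le_compat; lra.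
nra.
Qed.

Section Grid.
Variables d n : nat.

Definition grid_pt (m : {ffun 'I_d -> 'I_n.+1}) : pt d := fun k => INR (m k) / INR n.+1.

Definition grid_next (j : 'I_d) (m : {ffun 'I_d -> 'I_n.+1}) : {ffun 'I_d -> 'I_n.+1} :=
  [ffun k => if k == j then ordS (m k) else m k].

Lemma grid_next_inj j : injective (grid_next j).
Proof.
move=> m1 m2 E; apply/ffunP => k; have := congr1 (fun m : {ffun 'I_d -> 'I_n.+1} => m k) E.
by rewrite !ffunE; case: (k == j) => //; apply: ordS_inj.
Qed.

Lemma grid_step_pos : 0 < INR n.+1.
Proof. by rewrite S_INR; have := pos_INR n; lra. Qed.

Lemma grid_shift_in_cube m j t :
  0 <= t <= / INR n.+1 -> in_cube (fun _ => 0) 1 (shift (grid_pt m) j t).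
Proof.
move=> ht k; rewrite /shift /grid_pt.
have hN := grid_step_pos.
have hm1 : INR (m k) + 1 <= INR n.+1 by rewrite -S_INR; apply: le_INR; apply/leP.
have h0 := pos_INR (m k).
have E : INR (m k) / INR n.+1 + t <= 1.
  have : t * INR n.+1 <= 1 by have := Rinv_r (INR n.+1) ltac:(lra); nra.
  move=> h; apply: (Rmult_le_reg_r (INR n.+1)) => //.
  rewrite Rmult_plus_distr_r /Rdiv Rmult_assoc Rinv_l; lra.
have E2 : 0 <= INR (m k) / INR n.+1 by apply: Rmult_le_pos; [lra | apply: Rlt_le; apply: Rinv_0_lt_compat].
case: (k == j); lra.
Qed.

Lemma grid_shift_periodic (f : pt d -> R) j m : periodic f ->
  f (shift (grid_pt m) j (/ INR n.+1)) = f (grid_pt (grid_next j m)).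
Proof.
move=> Pf; have hN := grid_step_pos.
have hm : (m j < n.+1)%N by apply: ltn_ord.
case: (ltnP (m j).+1 n.+1) => h.
- congr f; apply: functional_extensionality => k; rewrite /shift /grid_pt ffunE.
  case: eqP => [->|] //.
  have -> : nat_of_ord (ordS (m j)) = (m j).+1 by rewrite /ordS /= modn_small.
  rewrite (S_INR (m j)); field; lra.
- have Ej : (m j).+1 = n.+1 by apply/eqP; rewrite eqn_leq h hm.
  rewrite -(Pf (grid_pt (grid_next j m)) j); congr f.
  apply: functional_extensionality => k; rewrite /shift /grid_pt ffunE.
  case: eqP => [->|] //.
  have -> : nat_of_ord (ordS (m j)) = 0%N by rewrite /ordS /= Ej modnn.
  have : INR (m j) + 1 = INR n.+1 by rewrite -S_INR Ej.
  rewrite [INR 0]/= => h2; rewrite -h2; field; lra.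
Qed.

Lemma grid_sum_shift (f : pt d -> R) j : periodic f ->
  \big[Rplus/0]_(m : {ffun 'I_d -> 'I_n.+1}) f (shift (grid_pt m) j (/ INR n.+1)) =
  \big[Rplus/0]_(m : {ffun 'I_d -> 'I_n.+1}) f (grid_pt m).
Proof.
move=> Pf; rewrite [RHS](reindex_inj (@grid_next_inj j)) /=.
by apply: eq_bigr => m _; rewrite grid_shift_periodic.
Qed.
End Grid.

(* Discrete form of "the integral of a divergence over the torus vanishes":
   summing the increments F_j(x + h e_j) - F_j(x) over the grid of step
   h = 1/(n+1) gives 0, while by Taylor each such sum is h kappa + O(h^2). *)
Lemma const_div_bound d (F : pt d -> 'I_d -> R) kappa M n :
  (forall j, smooth_T (fun x => F x j)) -> (forall x, div F x = kappa) ->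
  (forall j x, in_cube (fun _ => 0) 1 x -> Rabs (pd j (pd j (fun y => F y j)) x) <= M) ->
  Rabs kappa <= sumI (fun _ : 'I_d => 1) * M * / INR n.+1.
Proof.
move=> SF DF HM; set D := sumI _; set h := / INR n.+1.
have hh : 0 < h by apply: Rinv_0_lt_compat; exact: grid_step_pos.
set C := \big[Rplus/0]_(m : {ffun 'I_d -> 'I_n.+1}) 1.
have C1 : 1 <= C by exact: (big_ge_term [ffun => ord0] (fun _ => Rle_0_1)).
pose incr (m : {ffun 'I_d -> 'I_n.+1}) j := F (shift (grid_pt m) j h) j - F (grid_pt m) j.
pose S (m : {ffun 'I_d -> 'I_n.+1}) := \big[Rplus/0]_(j : 'I_d) incr m j.
pose E (m : {ffun 'I_d -> 'I_n.+1}) := S m - h * kappa.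
have taylor_error m : Rabs (E m) <= D * (M * (h * h)).
  rewrite /E /S -(DF (grid_pt m)) /div /sumI -big_scal -big_sub.
  apply: Rle_trans (big_abs _ _ _) _; rewrite [D * _]Rmult_comm /D /sumI -big_scal.
  apply: big_le => j; rewrite Rmult_1_r; apply: (@taylor2 _ (fun y => F y j)) => // t ht.
  by apply: HM; exact: grid_shift_in_cube.
have telescope : \big[Rplus/0]_(m : {ffun 'I_d -> 'I_n.+1}) S m = 0.
  rewrite /S exchange_big /=; apply: big1 => j _.
  rewrite big_sub /h (@grid_sum_shift _ _ (fun y => F y j)) ?Rminus_diag //.
  by have [] := SF j.
have sum_identity : h * kappa * C + \big[Rplus/0]_(m : {ffun 'I_d -> 'I_n.+1}) E m = 0.
  rewrite -[RHS]telescope /C -big_scal -big_split /=; apply: eq_bigr => m _; rewrite /E; ring.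
have bound : Rabs (h * kappa * C) <= C * (D * (M * (h * h))).
  rewrite (_ : h * kappa * C = - \big[Rplus/0]_(m : {ffun 'I_d -> 'I_n.+1}) E m) ?Rabs_Ropp; last lra.
  apply: Rle_trans (big_abs _ _ _) _; rewrite [C * _]Rmult_comm /C -big_scal; apply: big_le => m.
  by rewrite Rmult_1_r; exact: taylor_error.
rewrite !Rabs_mult (Rabs_right h) ?(Rabs_right C) in bound; try lra.
apply: (Rmult_le_reg_l (h * C)); first nra.
have -> : h * C * (D * M * h) = C * (D * (M * (h * h))) by ring.
lra.
Qed.

(* Letting the grid step tend to 0 in [const_div_bound]; the second
   derivatives are bounded on the unit cube by compactness. *)
Lemma div_const_zero d (F : pt d -> 'I_d -> R) kappa :
  (forall j, smooth_T (fun x => F x j)) -> (forall x, div F x = kappa) -> kappa = 0.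
Proof.
move=> SF DF.
have [M HM] : exists M, forall j x, in_cube (fun _ => 0) 1 x ->
    Rabs (pd j (pd j (fun y => F y j)) x) <= M.
  apply: (@common_bound _ _ (fun _ => in_cube (fun _ => 0) 1)) => j; apply: bounded_on_unit_cube.
  by have [_ H] := SF j; exact: (Ck_cont (Ck_pd (Ck_pd (H 2%N) j) j)).
set D := sumI (fun _ : 'I_d => 1).
apply: NNPP => hk; have hk' : 0 < Rabs kappa by apply: Rabs_pos_lt.
set K := Rabs (D * M) + 1; have hK : 0 < K by have := Rabs_pos (D * M); rewrite /K; lra.
have [n [hn hn0]] := archimed_cor1 (Rabs kappa / K) ltac:(apply: Rdiv_lt_0_compat; lra).
have B := const_div_bound n SF DF HM; rewrite -/D in B.
have hN : 0 < INR n by apply: lt_0_INR.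
have hN1 : / INR n.+1 <= / INR n.
  by apply: Rinv_le_contravar => //; rewrite S_INR; lra.
have : D * M * / INR n.+1 <= K * / INR n.
  have ha : 0 < / INR n.+1 by apply: Rinv_0_lt_compat; exact: grid_step_pos.
  have h1 := Rmult_le_compat_r _ _ _ (Rlt_le _ _ ha) (Rle_abs (D * M)).
  have h2 := Rmult_le_compat_l _ _ _ (Rabs_pos (D * M)) hN1.
  rewrite /K; lra.
have : K * / INR n < Rabs kappa.
  rewrite {1}(_ : Rabs kappa = K * (Rabs kappa / K)); last by field; lra.
  exact: Rmult_lt_compat_l.
lra.
Qed.

(** * The pressure law near a limit density *)

(* The continuous extension of r |-> r^gamma to r >= 0 (gamma > 0). *)
Definition press0 (gamma a : R) : R := if Rlt_dec 0 a then Rpower a gamma else 0.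

Lemma lim0_press gamma (rho : R -> R) a : 0 < gamma -> near0 (fun e => 0 < rho e) -> lim0 rho a ->
  lim0 (fun e => press gamma (rho e)) (press0 gamma a).
Proof.
move=> hg Hp Hr; have a0 := lim0_nonneg Hp Hr; rewrite /press0.
case: Rlt_dec => ha; first exact: (lim0_comp (derivable_pt_lim_power a gamma ha) Hr).
have a00 : a = 0 by lra.
move=> eta heta; rewrite a00 in Hr.
have hb : 0 < Rpower eta (/ gamma) by apply: exp_pos.
have [d [hd Hd]] := near0_and Hp (Hr _ hb).
exists d; split=> // e he; have [p q] := Hd e he.
rewrite !Rminus_0_r Rabs_right in q *; last lra.
rewrite Rabs_right; last by apply: Rle_ge; apply: Rlt_le; apply: exp_pos.
have := Rlt_Rpower_l (rho e) (Rpower eta (/ gamma)) gamma hg (conj p q).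
by rewrite Rpower_mult Rinv_l ?Rpower_1 //; lra.
Qed.

Lemma press0_inj gamma a b : 0 < gamma -> 0 <= a -> 0 <= b -> press0 gamma a = press0 gamma b -> a = b.
Proof.
move=> hg ha hb; rewrite /press0 /Rpower.
case: Rlt_dec => h1; case: Rlt_dec => h2 /= E; try lra.
- apply: ln_inv => //; apply: (Rmult_eq_reg_l gamma); [exact: exp_inv | lra].
- by have := exp_pos (gamma * ln a); lra.
- by have := exp_pos (gamma * ln b); lra.
Qed.

(** * Asymptotic expansions *)

Definition C1_conv {d} (F : R -> pt d -> R) (f : pt d -> R) x (i : 'I_d) : Prop :=
  lim0 (fun e => F e x) (f x) /\ near0 (fun e => has_pd i (F e) x (pd i (F e) x)) /\
  lim0 (fun e => pd i (F e) x) (pd i f x) /\ has_pd i f x (pd i f x).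

Lemma C1_conv_mult d (F G : R -> pt d -> R) f g x i : C1_conv F f x i -> C1_conv G g x i ->
  C1_conv (fun e y => F e y * G e y) (fun y => f y * g y) x i.
Proof.
move=> [F1 [F2 [F3 F4]]] [G1 [G2 [G3 G4]]].
have Dfg := has_pd_mult F4 G4.
split; [exact: lim0_mult F1 G1 | split; [|split]]; last by rewrite (pd_eq Dfg).
- by apply: near0_mono (near0_and F2 G2) => e _ [h1 h2]; rewrite (pd_eq (has_pd_mult h1 h2)); exact: has_pd_mult.
- rewrite (pd_eq Dfg); apply: lim0_ext (lim0_plus (lim0_mult F3 G1) (lim0_mult F1 G3)).
  by apply: near0_mono (near0_and F2 G2) => e _ [h1 h2]; rewrite (pd_eq (has_pd_mult h1 h2)).
Qed.

Lemma C1_conv_ext d (F G : R -> pt d -> R) f x i : near0 (fun e => forall y, F e y = G e y) ->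
  C1_conv F f x i -> C1_conv G f x i.
Proof.
move=> E [F1 [F2 [F3 F4]]]; split; [|split; [|split]] => //.
- by apply: lim0_ext F1; apply: near0_mono E => e _; apply.
- apply: near0_mono (near0_and E F2) => e _ [h1 h2].
  by rewrite -(pd_ext i x h1); exact: has_pd_ext h1 h2.
- by apply: lim0_ext F3; apply: near0_mono E => e _ h; exact: pd_ext.
Qed.

Section Expansion.
Variables (d : nat) (F : R -> pt d -> R) (f0 f1 f2 : pt d -> R).
Hypothesis HF : expand2 F f0 f1 f2.

Lemma expansion_smooth : smooth_T f0 /\ smooth_T f1 /\ smooth_T f2.
Proof. by case: HF => [h0 [h1 [h2 _]]]. Qed.

Lemma expansion_val x : lim0 (fun e => (F e x - f0 x - e * f1 x - e ^ 2 * f2 x) / e ^ 2) 0.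
Proof.
case: HF => [_ [_ [_ S]]] eta heta.
have [e0 [he0 H]] := S (eta / 2) ltac:(lra).
exists e0; split=> // e he; have [_ /(_ x) [H3 _]] := H e he.
have he2 : 0 < e ^ 2 by apply: pow_lt; lra.
rewrite Rminus_0_r /Rdiv Rabs_mult Rabs_inv (Rabs_right (e ^ 2)); last lra.
apply: (Rmult_lt_reg_r (e ^ 2)) => //; rewrite Rmult_assoc Rinv_l ?Rmult_1_r; nra.
Qed.

Lemma remainder_pd x i : lim0 (fun e => pd i (fun y => F e y - f0 y - e * f1 y - e ^ 2 * f2 y) x / e ^ 2) 0.
Proof.
case: HF => [_ [_ [_ S]]] eta heta.
have [e0 [he0 H]] := S (eta / 2) ltac:(lra).
exists e0; split=> // e he; have [_ /(_ x) [_ /(_ i) H3]] := H e he.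
have he2 : 0 < e ^ 2 by apply: pow_lt; lra.
rewrite Rminus_0_r /Rdiv Rabs_mult Rabs_inv (Rabs_right (e ^ 2)); last lra.
apply: (Rmult_lt_reg_r (e ^ 2)) => //; rewrite Rmult_assoc Rinv_l ?Rmult_1_r; nra.
Qed.

Lemma expansion_has_pd x i : near0 (fun e => has_pd i (F e) x
   (pd i f0 x + e * pd i f1 x + e ^ 2 * pd i f2 x +
    pd i (fun y => F e y - f0 y - e * f1 y - e ^ 2 * f2 y) x)).
Proof.
have [S0 [S1 S2]] := expansion_smooth.
case: HF => [_ [_ [_ S]]]; have [e0 [he0 H]] := S 1 Rlt_0_1.
exists e0; split=> // e he; have [Hr _] := H e he.
apply: (@has_pd_ext _ _ (fun y => f0 y + e * f1 y + e ^ 2 * f2 y +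
  (F e y - f0 y - e * f1 y - e ^ 2 * f2 y))); first by move=> y; ring.
apply: has_pd_plus; last by apply: pd_spec; exact: (Ck_has_pd Hr).
by apply: has_pd_plus; [apply: has_pd_plus|]; try apply: has_pd_scal; exact: smooth_has_pd.
Qed.

Lemma expansion_pd x i :
  lim0 (fun e => (pd i (F e) x - pd i f0 x - e * pd i f1 x - e ^ 2 * pd i f2 x) / e ^ 2) 0.
Proof.
apply: lim0_ext (remainder_pd x i); apply: near0_mono (expansion_has_pd x i) => e he h.
by rewrite (pd_eq h); field; lra.
Qed.

Lemma expansion_C1 x i : C1_conv F f0 x i.
Proof.
split; first by have [] := lim0_coeffs (expansion_val x).
split; first by apply: near0_mono (expansion_has_pd x i) => e _ h; rewrite (pd_eq h).
split; first by have [] := lim0_coeffs (expansion_pd x i).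
exact: smooth_has_pd expansion_smooth.1 i x.
Qed.
End Expansion.

(** * The limit eps -> 0+ of the IMEX-RK stages *)

Lemma lim0_div d (G : R -> pt d -> 'I_d -> R) (a : 'I_d -> R) x :
  (forall j, lim0 (fun e => pd j (fun y => G e y j) x) (a j)) ->
  lim0 (fun e => div (G e) x) (\big[Rplus/0]_(j : 'I_d) a j).
Proof. by move=> H; apply: lim0_big => j _ _; exact: H. Qed.

Section Scheme.
Variables (d s : nat) (gamma dt : R) (At A : nat -> nat -> R) (wt w : nat -> R)
  (rhon0 rhon2 : pt d -> R) (un0 un1 : pt d -> 'I_d -> R)
  (rho : R -> nat -> pt d -> R) (q : R -> nat -> pt d -> 'I_d -> R)
  (rho0 rho1 rho2 : nat -> pt d -> R) (u0 u1 u2 : nat -> pt d -> 'I_d -> R)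
  (p0 p1 p2 : nat -> pt d -> R).
Hypothesis gamma_pos : 0 < gamma.
Hypothesis dt_pos : 0 < dt.
Hypothesis s_pos : (1 <= s)%N.
Hypothesis dirk : DIRK s At A.
Hypothesis gsa : GSA s At A wt w.
Hypothesis type_A_or_CK : typeA s A \/ typeCK s A.
Hypothesis rhon0_smooth : smooth_T rhon0.
Hypothesis rhon0_pos : forall x, 0 < rhon0 x.
Hypothesis rhon0_grad : forall i x, pd i rhon0 x = 0.
Hypothesis un0_div : forall x, div un0 x = 0.
Hypothesis stages : exists e1, 0 < e1 /\ forall eps, 0 < eps < e1 -> forall k, (k < s)%N ->
     (forall x, 0 < rho eps k x) /\ periodic (rho eps k) /\
     (forall i, periodic (fun x => q eps k x i)) /\
     IMEX_stage gamma dt eps At A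
       (fun x => rhon0 x + eps ^ 2 * rhon2 x)
       (fun x i => (rhon0 x + eps ^ 2 * rhon2 x) * (un0 x i + eps * un1 x i))
       (rho eps) (q eps) k.
Hypothesis expansions : forall k, (k < s)%N ->
     expand2 (fun e => rho e k) (rho0 k) (rho1 k) (rho2 k) /\
     (forall i, expand2 (fun e x => q e k x i / rho e k x)
                  (fun x => u0 k x i) (fun x => u1 k x i) (fun x => u2 k x i)) /\
     expand2 (fun e x => press gamma (rho e k x)) (p0 k) (p1 k) (p2 k).

Lemma stage_pos k : (k < s)%N -> near0 (fun e => forall x, 0 < rho e k x).
Proof. by move=> hk; apply: near0_mono stages => e _ /(_ k hk) []. Qed.

Lemma density_eq k : (k < s)%N -> near0 (fun e => forall x, rho e k x =
  rhon0 x + e ^ 2 * rhon2 x - dt * sumN 0 k.+1 (fun l => A k l * div (q e l) x)).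
Proof. by move=> hk; apply: near0_mono stages => e _ /(_ k hk) [_ [_ [_ []]]]. Qed.

Lemma momentum_eq k : (k < s)%N -> near0 (fun e => forall x i, q e k x i =
      (rhon0 x + e ^ 2 * rhon2 x) * (un0 x i + e * un1 x i)
      - dt * sumN 0 k (fun l => At k l * div (fun y j => q e l y i * q e l y j / rho e l y) x)
      - dt / e ^ 2 * sumN 0 k.+1 (fun l => A k l * pd i (fun y => press gamma (rho e l y)) x)).
Proof. by move=> hk; apply: near0_mono stages => e _ /(_ k hk) [_ [_ [_ []]]]. Qed.

Lemma lim0_rho k x : (k < s)%N -> lim0 (fun e => rho e k x) (rho0 k x).
Proof. by move=> hk; have [] := lim0_coeffs (expansion_val (expansions hk).1 x). Qed.

Lemma lim0_p k x : (k < s)%N -> lim0 (fun e => press gamma (rho e k x)) (p0 k x).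
Proof. by move=> hk; have [] := lim0_coeffs (expansion_val (expansions hk).2.2 x). Qed.

Lemma lim0_data_density x : lim0 (fun e => rhon0 x + e ^ 2 * rhon2 x) (rhon0 x).
Proof.
have := lim0_plus (lim0_const (rhon0 x)) (lim0_mult (lim0_mult lim0_id lim0_id) (lim0_const (rhon2 x))).
by rewrite !Rmult_0_l Rplus_0_r; apply: lim0_ext; apply: near0_true => e _ /=; ring.
Qed.

Lemma lim0_data_momentum x i :
  lim0 (fun e => (rhon0 x + e ^ 2 * rhon2 x) * (un0 x i + e * un1 x i)) (rhon0 x * un0 x i).
Proof.
have := lim0_mult (lim0_data_density x) (lim0_plus (lim0_const (un0 x i)) (lim0_mult lim0_id (lim0_const (un1 x i)))).
by rewrite Rmult_0_l Rplus_0_r.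
Qed.

Lemma C1_rho k x i : (k < s)%N -> C1_conv (fun e => rho e k) (rho0 k) x i.
Proof. by move=> hk; exact: expansion_C1 (expansions hk).1 x i. Qed.

Lemma C1_u k j x i : (k < s)%N ->
  C1_conv (fun e y => q e k y j / rho e k y) (fun y => u0 k y j) x i.
Proof. by move=> hk; exact: expansion_C1 ((expansions hk).2.1 j) x i. Qed.

Lemma C1_q k j x i : (k < s)%N -> C1_conv (fun e y => q e k y j) (fun y => rho0 k y * u0 k y j) x i.
Proof.
move=> hk; apply: C1_conv_ext (C1_conv_mult (C1_rho x i hk) (C1_u j x i hk)).
by apply: near0_mono (stage_pos hk) => e _ P y; field; have := P y; lra.
Qed.

Lemma C1_flux k i j x : (k < s)%N ->
  C1_conv (fun e y => q e k y i * q e k y j / rho e k y)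
          (fun y => rho0 k y * (u0 k y i * u0 k y j)) x j.
Proof.
move=> hk; apply: C1_conv_ext (C1_conv_mult (C1_rho x j hk) (C1_conv_mult (C1_u i x j hk) (C1_u j x j hk))).
by apply: near0_mono (stage_pos hk) => e _ P y; field; have := P y; lra.
Qed.

Definition div_mom0 l x := \big[Rplus/0]_(j : 'I_d) pd j (fun y => rho0 l y * u0 l y j) x.
Definition div_flux0 l i x :=
  \big[Rplus/0]_(j : 'I_d) pd j (fun y => rho0 l y * (u0 l y i * u0 l y j)) x.

Lemma lim0_div_mom l x : (l < s)%N -> lim0 (fun e => div (q e l) x) (div_mom0 l x).
Proof. by move=> hl; apply: lim0_div => j; have [_ [_ []]] := C1_q j x j hl. Qed.

Lemma lim0_div_flux l i x : (l < s)%N ->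
  lim0 (fun e => div (fun y j => q e l y i * q e l y j / rho e l y) x) (div_flux0 l i x).
Proof. by move=> hl; apply: lim0_div => j; have [_ [_ []]] := C1_flux i j x hl. Qed.

Lemma leading_density k x : (k < s)%N ->
  rho0 k x = rhon0 x - dt * sumN 0 k.+1 (fun l => A k l * div_mom0 l x).
Proof.
move=> hk; apply: lim0_unique (lim0_rho x hk) _.
apply: lim0_ext (lim0_minus (lim0_data_density x)
  (lim0_scal dt (lim0_sumN (fun l hl => lim0_scal (A k l) (lim0_div_mom x (leq_trans hl hk)))))).
by apply: near0_mono (density_eq hk) => e _ ->.
Qed.

(* Orders 0, 1, 2 of the momentum equation multiplied by eps^2. *)
Lemma momentum_orders k i x : (k < s)%N ->
  sumN 0 k.+1 (fun l => A k l * pd i (p0 l) x) = 0 /\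
  sumN 0 k.+1 (fun l => A k l * pd i (p1 l) x) = 0 /\
  sumN 0 k.+1 (fun l => A k l * pd i (p2 l) x) =
   (rhon0 x * un0 x i - rho0 k x * u0 k x i - dt * sumN 0 k (fun l => At k l * div_flux0 l i x)) / dt.
Proof.
move=> hk.
pose P l e := pd i (fun y => press gamma (rho e l y)) x.
pose r l e := (P l e - pd i (p0 l) x - e * pd i (p1 l) x - e ^ 2 * pd i (p2 l) x) / e ^ 2.
pose M e := ((rhon0 x + e ^ 2 * rhon2 x) * (un0 x i + e * un1 x i) - q e k x i -
  dt * sumN 0 k (fun l => At k l * div (fun y j => q e l y i * q e l y j / rho e l y) x)) / dt.
apply: (@match_orders _ _ _ _ (fun e => e ^ 2 * sumN 0 k.+1 (fun l => A k l * r l e)) M).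
- apply: near0_mono (momentum_eq hk) => e he H; rewrite -sumN_expand.
  rewrite (@sumN_ext _ _ (fun l => A k l * P l e)); last by move=> l _; rewrite /r; field; lra.
  by rewrite /M (H x i) /P; field; lra.
- have L : forall l, (l < k.+1)%N -> lim0 (fun e => A k l * r l e) (A k l * 0).
    move=> l hl; apply: lim0_scal; apply: lim0_ext (expansion_pd (expansions (leq_trans hl hk)).2.2 x i).
    by apply: near0_true.
  have := lim0_sumN L; rewrite sumN_zero => [|l _]; last by ring.
  by apply: lim0_ext; apply: near0_true => e he; field; lra.
- have L : forall l, (l < k)%N -> lim0 (fun e => At k l * div (fun y j => q e l y i * q e l y j / rho e l y) x)
      (At k l * div_flux0 l i x).
    by move=> l hl; apply: lim0_scal; exact: lim0_div_flux (ltn_trans hl hk).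
  have := lim0_mult (lim0_minus (lim0_minus (lim0_data_momentum x i) (C1_q i x i hk).1)
     (lim0_scal dt (lim0_sumN L))) (lim0_const (/ dt)).
  by apply: lim0_ext; apply: near0_true => e he; rewrite /M; field; lra.
Qed.

Lemma rhon0_const x y : rhon0 x = rhon0 y.
Proof. by apply: grad0_const => i z; rewrite -(rhon0_grad i z); exact: smooth_has_pd. Qed.

Lemma ck_first_density : typeCK s A ->
  near0 (fun e => forall y, rho e 0 y = rhon0 y + e ^ 2 * rhon2 y).
Proof.
move=> [_ [h0 _]]; apply: near0_mono (density_eq s_pos) => e _ H y.
by rewrite H sumN_rec // /sumN big_geq // h0 //; ring.
Qed.

Lemma ck_first_momentum : typeCK s A ->
  near0 (fun e => forall y j, q e 0 y j = (rhon0 y + e ^ 2 * rhon2 y) * (un0 y j + e * un1 y j)).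
Proof.
move=> [_ [h0 _]]; apply: near0_mono (momentum_eq s_pos) => e _ H y j.
by rewrite H sumN_rec // /sumN !big_geq // h0 //; ring.
Qed.

Lemma p0_press0 k y : (k < s)%N -> p0 k y = press0 gamma (rho0 k y).
Proof.
move=> hk; apply: lim0_unique (lim0_p y hk) _.
by apply: lim0_press => //; [apply: near0_mono (stage_pos hk) => e _; apply | exact: lim0_rho].
Qed.

Lemma rho0_nonneg k y : (k < s)%N -> 0 <= rho0 k y.
Proof. by move=> hk; apply: lim0_nonneg (lim0_rho y hk); apply: near0_mono (stage_pos hk) => e _; apply. Qed.

Lemma grad_p0_zero k i x : (k < s)%N -> pd i (p0 k) x = 0.
Proof.
move: k; apply: (lower_triangular_zero (A := A) (v := fun l => pd i (p0 l) x)).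
  by move=> k hk; have [] := momentum_orders i x hk.
move=> k hk; case: type_A_or_CK => [hA|hCK]; first by left; apply: hA.
case: k hk => [|k] hk; last by left; apply: hCK.2.2.
right; apply: (@pd_const_fun _ _ _ _ (Rpower (rhon0 x) gamma)) => y.
rewrite (rhon0_const x y); apply: lim0_unique (lim0_p y hk) _.
apply: lim0_ext (lim0_comp (derivable_pt_lim_power (rhon0 y) gamma (rhon0_pos y)) (lim0_data_density y)).
by apply: near0_mono (ck_first_density hCK) => e _ H; rewrite /press H.
Qed.

Lemma rho0_const k x y : (k < s)%N -> rho0 k x = rho0 k y.
Proof.
move=> hk; have Sp := (expansion_smooth (expansions hk).2.2).1.
have C : p0 k x = p0 k y.
  by apply: grad0_const => i z; rewrite -(grad_p0_zero i z hk); exact: smooth_has_pd.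
by rewrite !p0_press0 // in C; apply: press0_inj C => //; exact: rho0_nonneg.
Qed.

(* Since rho0 l is constant, the leading divergences only involve u0 l. *)
Lemma div_mom0_eq l x : (l < s)%N -> div_mom0 l x = rho0 l x * div (u0 l) x.
Proof.
move=> hl; rewrite /div_mom0 /div /sumI -big_scal; apply: eq_bigr => j _.
have Sr := (expansion_smooth (expansions hl).1).1.
have Su := (expansion_smooth ((expansions hl).2.1 j)).1.
rewrite (pd_eq (has_pd_mult (smooth_has_pd Sr j x) (smooth_has_pd Su j x))).
by rewrite (@pd_const_fun _ _ _ _ (rho0 l x)) => [|y]; [ring | exact: rho0_const].
Qed.

Lemma div_flux0_eq l i x : (l < s)%N ->
  div_flux0 l i x = rho0 l x * div (fun y j => u0 l y i * u0 l y j) x.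
Proof.
move=> hl; rewrite /div_flux0 /div /sumI -big_scal; apply: eq_bigr => j _.
have Sr := (expansion_smooth (expansions hl).1).1.
have Sui := (expansion_smooth ((expansions hl).2.1 i)).1.
have Suj := (expansion_smooth ((expansions hl).2.1 j)).1.
have D2 : has_pd j (fun y => u0 l y i * u0 l y j) x (pd j (fun y => u0 l y i * u0 l y j) x).
  by apply: pd_spec; eexists; exact: has_pd_mult (smooth_has_pd Sui j x) (smooth_has_pd Suj j x).
rewrite (pd_eq (has_pd_mult (smooth_has_pd Sr j x) D2)).
by rewrite (@pd_const_fun _ _ _ _ (rho0 l x)) => [|y]; [ring | exact: rho0_const].
Qed.

Lemma ck_first_u0 : typeCK s A -> forall y j, u0 0 y j = un0 y j.
Proof.
move=> hCK y j; apply: lim0_unique ((lim0_coeffs (expansion_val ((expansions s_pos).2.1 j) y)).1) _.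
have := lim0_plus (lim0_const (un0 y j)) (lim0_mult lim0_id (lim0_const (un1 y j))).
rewrite Rmult_0_l Rplus_0_r; apply: lim0_ext.
apply: near0_mono (near0_and (ck_first_density hCK) (near0_and (ck_first_momentum hCK) (stage_pos s_pos))).
by move=> e _ [H1 [H2 H3]]; have := H3 y; rewrite H1 H2 => h; field; lra.
Qed.

Lemma density_stage k x : (k < s)%N -> (forall l, (l < k)%N -> forall x, div (u0 l) x = 0) ->
  rho0 k x = rhon0 x - dt * (A k k * (rho0 k x * div (u0 k) x)).
Proof.
move=> hk IH; rewrite {1}(leading_density x hk) sumN_rec // sumN_zero => [|l hl].
  by rewrite div_mom0_eq //; ring.
by rewrite div_mom0_eq ?IH ?Rmult_0_r //; exact: ltn_trans hl hk.
Qed.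

(* A stage with a_kk <> 0 has a constant divergence (the density
   equation expresses it through constants), hence a zero one; the only stage
   with a_kk = 0 is the first stage of a CK scheme, which is the data. *)
Lemma stage_well_prepared k : (k < s)%N ->
  (forall x, rho0 k x = rhon0 x) /\ (forall x, div (u0 k) x = 0).
Proof.
elim/ltn_ind: k => k IH hk.
have De := fun x => density_stage x hk (fun l hl => (IH l hl (ltn_trans hl hk)).2).
have [hA|hA] := Req_dec (A k k) 0.
  have hCK : typeCK s A by case: type_A_or_CK => // /(_ k hk).
  case: k hk {IH} hA De => [|k] hk hA De; last by have := hCK.2.2 k.+1 isT hk.
  split=> x; first by rewrite De hA; ring.
  by rewrite (_ : u0 0%N = un0) //; do 2 apply: functional_extensionality => ?; exact: ck_first_u0.
have nz x : rho0 k x <> 0 by move=> hx; have := De x; rewrite hx; have := rhon0_pos x; nra.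
have Dv x : div (u0 k) x = (rhon0 x - rho0 k x) / (dt * A k k * rho0 k x).
  by have := De x => h; field_simplify_eq; [nra | split; [exact: nz | split; lra]].
have K0 : div (u0 k) (fun _ => 0) = 0.
  apply: (@div_const_zero _ (u0 k)) => [j | x]; first exact: (expansion_smooth ((expansions hk).2.1 j)).1.
  by rewrite !Dv (rhon0_const x (fun _ => 0)) (rho0_const x (fun _ => 0) hk).
have Z x : div (u0 k) x = 0.
  by rewrite Dv (rhon0_const x (fun _ => 0)) (rho0_const x (fun _ => 0) hk) -Dv.
by split=> // x; rewrite De Z; ring.
Qed.

Lemma p0_eq k x : (k < s)%N -> p0 k x = Rpower (rhon0 x) gamma.
Proof.
move=> hk; rewrite p0_press0 // (stage_well_prepared hk).1 /press0.
by case: Rlt_dec => // h; exfalso; apply: h; apply: rhon0_pos.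
Qed.

Lemma p1_eq k x : (k < s)%N -> p1 k x = gamma * Rpower (rhon0 x) (gamma - 1) * rho1 k x.
Proof.
move=> hk.
have [L0 [Lr _]] := lim0_coeffs (expansion_val (expansions hk).1 x).
have [_ [L1 _]] := lim0_coeffs (expansion_val (expansions hk).2.2 x).
rewrite (stage_well_prepared hk).1 in L0 Lr; rewrite p0_eq // in L1.
exact: lim0_unique L1 (lim0_chain (derivable_pt_lim_power (rhon0 x) gamma (rhon0_pos x)) L0 Lr).
Qed.

Lemma ck_first_rho1 : typeCK s A -> forall y, rho1 0 y = 0.
Proof.
move=> hCK y.
have [_ [Lr _]] := lim0_coeffs (expansion_val (expansions s_pos).1 y).
rewrite (stage_well_prepared s_pos).1 in Lr; apply: lim0_unique Lr _.
have := lim0_mult lim0_id (lim0_const (rhon2 y)); rewrite Rmult_0_l; apply: lim0_ext.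
by apply: near0_mono (ck_first_density hCK) => e he ->; rewrite /=; field; lra.
Qed.

Lemma grad_p1_zero k i x : (k < s)%N -> pd i (p1 k) x = 0.
Proof.
move: k; apply: (lower_triangular_zero (A := A) (v := fun l => pd i (p1 l) x)).
  by move=> k hk; have [_ []] := momentum_orders i x hk.
move=> k hk; case: type_A_or_CK => [hA|hCK]; first by left; apply: hA.
case: k hk => [|k] hk; last by left; apply: hCK.2.2.
right; apply: (@pd_const_fun _ _ _ _ 0) => y.
by rewrite p1_eq // ck_first_rho1 // Rmult_0_r.
Qed.

Lemma rho1_const k x y : (k < s)%N -> rho1 k x = rho1 k y.
Proof.
move=> hk; have Sp := (expansion_smooth (expansions hk).2.2).2.1.
have C : p1 k x = p1 k y.
  by apply: grad0_const => i z; rewrite -(grad_p1_zero i z hk); exact: smooth_has_pd.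
rewrite !p1_eq // (rhon0_const y x) in C.
have hp : 0 < gamma * Rpower (rhon0 x) (gamma - 1) by apply: Rmult_lt_0_compat => //; apply: exp_pos.
by apply: (Rmult_eq_reg_l (gamma * Rpower (rhon0 x) (gamma - 1))); lra.
Qed.

(* Order 2 of the last momentum equation, rewritten with GSA: the limit
   scheme for the incompressible Euler equations. *)
Lemma limit_velocity x i :
  u0 (s - 1)%N x i =
     un0 x i
     - dt * sumN 0 s (fun k => wt k * div (fun y j => u0 k y i * u0 k y j) x)
     - dt / rhon0 x * sumN 0 s (fun k => w k * pd i (p2 k) x).
Proof.
have Es : (s - 1).+1 = s by rewrite subn1 prednK.
have hk : (s - 1 < s)%N by rewrite -{2}Es.
have [_ [_ M2]] := momentum_orders i x hk; rewrite Es in M2.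
have E1 : sumN 0 s (fun l => A (s - 1)%N l * pd i (p2 l) x) = sumN 0 s (fun k => w k * pd i (p2 k) x).
  by apply: sumN_ext => l hl; rewrite (gsa hl).2.
have E2 : sumN 0 (s - 1) (fun l => At (s - 1)%N l * div_flux0 l i x) =
          rhon0 x * sumN 0 s (fun k => wt k * div (fun y j => u0 k y i * u0 k y j) x).
  have split_last F : sumN 0 s F = sumN 0 (s - 1) F + F (s - 1)%N by rewrite -sumN_rec // Es.
  rewrite split_last -(gsa hk).1 (dirk hk hk).1 // Rmult_0_l Rplus_0_r.
  rewrite /sumN -big_scal; apply: sumN_ext => l hl.
  have hls : (l < s)%N by apply: ltn_trans hl hk.
  by rewrite (gsa hls).1 div_flux0_eq // (stage_well_prepared hls).1; ring.
rewrite E1 E2 (stage_well_prepared hk).1 in M2; rewrite M2.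
by field; split; [lra | have := rhon0_pos x; lra].
Qed.

Lemma scheme_limit :
  (forall k, (k < s)%N ->
     (forall x, rho0 k x = rhon0 x) /\
     (forall x y, rho1 k x = rho1 k y) /\
     (forall x, div (u0 k) x = 0)) /\
  (forall x, rho0 (s - 1)%N x = rhon0 x) /\
  (forall x y, rho0 (s - 1)%N x = rho0 (s - 1)%N y) /\
  (forall x, div (u0 (s - 1)%N) x = 0) /\
  (forall x i, u0 (s - 1)%N x i =
     un0 x i
     - dt * sumN 0 s (fun k => wt k * div (fun y j => u0 k y i * u0 k y j) x)
     - dt / rhon0 x * sumN 0 s (fun k => w k * pd i (p2 k) x)).
Proof.
have hs : (s - 1 < s)%N by rewrite subn1 prednK.
have [last_rho0 last_div] := stage_well_prepared hs.
split; last by split=> //; split=> [x y|]; [exact: rho0_const | split=> //; exact: limit_velocity].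
move=> k hk; have [Hr Hu] := stage_well_prepared hk.
by split=> //; split=> // x y; exact: rho1_const.
Qed.
End Scheme.

Unset Implicit Arguments.

Theorem mainTheorem1 (d s : nat) (gamma dt : R)
  (At A : nat -> nat -> R) (wt w : nat -> R)
  (rhon0 rhon2 : pt d -> R) (un0 un1 : pt d -> 'I_d -> R)
  (rho : R -> nat -> pt d -> R) (q : R -> nat -> pt d -> 'I_d -> R)
  (rho0 rho1 rho2 : nat -> pt d -> R) (u0 u1 u2 : nat -> pt d -> 'I_d -> R)
  (p0 p1 p2 : nat -> pt d -> R) :
  0 < gamma -> 0 < dt -> (1 <= s)%N ->
  DIRK s At A -> GSA s At A wt w -> (typeA s A \/ typeCK s A) ->
  (* well-prepared data at t^n *)
  smooth_T rhon0 -> smooth_T rhon2 ->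
  (forall i, smooth_T (fun x => un0 x i)) -> (forall i, smooth_T (fun x => un1 x i)) ->
  (forall x, 0 < rhon0 x) -> (forall i x, pd i rhon0 x = 0) -> (forall x, div un0 x = 0) ->
  (* for all sufficiently small eps the stages exist, are positive, solve the scheme *)
  (exists e1, 0 < e1 /\ forall eps, 0 < eps < e1 -> forall k, (k < s)%N ->
     (forall x, 0 < rho eps k x) /\ periodic (rho eps k) /\
     (forall i, periodic (fun x => q eps k x i)) /\
     IMEX_stage gamma dt eps At A
       (fun x => rhon0 x + eps ^ 2 * rhon2 x)
       (fun x i => (rhon0 x + eps ^ 2 * rhon2 x) * (un0 x i + eps * un1 x i))
       (rho eps) (q eps) k) ->
  (* asymptotic expansions of the stage values (and of p(rho^k)) *)
  (forall k, (k < s)%N ->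
     expand2 (fun e => rho e k) (rho0 k) (rho1 k) (rho2 k) /\
     (forall i, expand2 (fun e x => q e k x i / rho e k x)
                  (fun x => u0 k x i) (fun x => u1 k x i) (fun x => u2 k x i)) /\
     expand2 (fun e x => press gamma (rho e k x)) (p0 k) (p1 k) (p2 k)) ->
  (forall k, (k < s)%N ->
     (forall x, rho0 k x = rhon0 x) /\
     (forall x y, rho1 k x = rho1 k y) /\
     (forall x, div (u0 k) x = 0)) /\
  (forall x, rho0 (s - 1)%N x = rhon0 x) /\
  (forall x y, rho0 (s - 1)%N x = rho0 (s - 1)%N y) /\
  (forall x, div (u0 (s - 1)%N) x = 0) /\
  (forall x i, u0 (s - 1)%N x i =
     un0 x i
     - dt * sumN 0 s (fun k => wt k * div (fun y j => u0 k y i * u0 k y j) x)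
     - dt / rhon0 x * sumN 0 s (fun k => w k * pd i (p2 k) x)).
Proof.
move=> gamma_pos dt_pos s_pos dirk gsa type rhon0_smooth _ _ _ rhon0_pos rhon0_grad un0_div stages expansions.
exact: (scheme_limit gamma_pos dt_pos s_pos dirk gsa type rhon0_smooth rhon0_pos rhon0_grad un0_div stages expansions).
Qed.
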